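(* There do not exist positive rational numbers $x_1,x_2,x_3,d_1,d_2,d_3$ satisfying $$x_1^2+x_2^2+x_3^2=1,\quad x_2^2+x_3^2=d_1^2,\quad x_3^2+x_1^2=d_2^2,\quad x_1^2+x_2^2=d_3^2$$ together with a rational number $c$ such that $$e_{[1,1]}=c,\qquad e_{[0,1]}=c,\qquad e_{[1,0]}=c-1.$$ In other words, no rational perfect cuboid with unit space diagonal corresponds to the one-parameter family $E_{11}=c$, $E_{01}=c$, $E_{10}=c-1$ of rational solutions of the equation $(2E_{11})^2+(E_{01}^2+1-E_{10}^2)^2=8E_{01}^2$.
   Context: A rational perfect cuboid with unit space diagonal is a tuple of positive rationals $x_1,x_2,x_3$ (edges) and $d_1,d_2,d_3$ (face diagonals) satisfying $x_1^2+x_2^2+x_3^2=1$, $x_2^2+x_3^2=d_1^2$, $x_3^2+x_1^2=d_2^2$, $x_1^2+x_2^2=d_3^2$. (Integer perfect cuboids, i.e. cuboids with integer edges, integer face diagonals and integer space diagonal $L$, correspond to these after dividing by $L$.) The elementary multisymmetric polynomials used are $e_{[1,0]}=x_1+x_2+x_3$, $e_{[0,1]}=d_1+d_2+d_3$, and $e_{[1,1]}=x_1d_2+d_1x_2+x_2d_3+d_2x_3+x_3d_1+d_3x_1$. *)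

From HB Require Import structures.
From mathcomp Require Import all_boot all_order all_algebra.
Set Implicit Arguments. Unset Strict Implicit. Unset Printing Implicit Defensive.
Import Order.TTheory GRing.Theory Num.Theory.
Local Open Scope ring_scope.

Definition unit_perfect_cuboid (x1 x2 x3 d1 d2 d3 : rat) : Prop :=
  (0 < x1 /\ 0 < x2 /\ 0 < x3 /\ 0 < d1 /\ 0 < d2 /\ 0 < d3) /\
  [/\ x1 ^+ 2 + x2 ^+ 2 + x3 ^+ 2 = 1,
      x2 ^+ 2 + x3 ^+ 2 = d1 ^+ 2,
      x3 ^+ 2 + x1 ^+ 2 = d2 ^+ 2 &
      x1 ^+ 2 + x2 ^+ 2 = d3 ^+ 2].

Definition e10 (x1 x2 x3 : rat) : rat := x1 + x2 + x3.
Definition e01 (d1 d2 d3 : rat) : rat := d1 + d2 + d3.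
Definition e11 (x1 x2 x3 d1 d2 d3 : rat) : rat :=
  x1 * d2 + d1 * x2 + x2 * d3 + d2 * x3 + x3 * d1 + d3 * x1.

From HB Require Import structures.
From mathcomp Require Import all_boot all_order all_algebra.
From mathcomp Require Import ring lra.
Import Order.TTheory GRing.Theory Num.Theory.
Local Open Scope ring_scope.

(* Adding the cuboid equations pairwise gives
   x_k^2 + d_k^2 = 1, so z_k = x_k + i d_k lie on the unit circle.  Write
   e1, e2, e3 for the elementary symmetric functions of z_1, z_2, z_3; then
   e1 = e10 + i e01, Im e2 = e11, and Re e2 is determined by the power sums
   of the x_k and d_k.  Since conj z = 1/z on the unit circle,
   e3 * conj(e2) = e1.  In the family e11 = e01 = c, e10 = c - 1 one finds
   e2 = (1 - c) + i c and e1 = -conj(e2) <> 0, hence e3 = z_1 z_2 z_3 = -1,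
   i.e. z_3 = -conj(z_1 z_2) and x_3 = d_1 d_2 - x_1 x_2.  Substituting into
   x_1^2 + x_2^2 + x_3^2 = 1 forces x_1 x_2 x_3 = 0, contradicting positivity.
   Complex numbers are never formed: the real and imaginary parts of e2 and e3
   are introduced as polynomials in the x_k, d_k, and every identity is
   checked over an arbitrary commutative ring (or real field, for the order
   arguments at the end). *)

Section UnitCircleTriples.

Variable R : comNzRingType.
Variables x1 x2 x3 d1 d2 d3 : R.

(* Real and imaginary parts of e2 = z1 z2 + z1 z3 + z2 z3. *)
Definition re_e2 : R := x1 * x2 + x1 * x3 + x2 * x3 - d1 * d2 - d1 * d3 - d2 * d3.
Definition im_e2 : R :=
  x1 * d2 + d1 * x2 + x2 * d3 + d2 * x3 + x3 * d1 + d3 * x1.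

(* Real and imaginary parts of e3 = z1 z2 z3. *)
Definition re_e3 : R := x1 * x2 * x3 - x1 * d2 * d3 - d1 * x2 * d3 - d1 * d2 * x3.
Definition im_e3 : R := x1 * x2 * d3 + x1 * d2 * x3 + d1 * x2 * x3 - d1 * d2 * d3.

Lemma re_e2_power_sums :
  2 * re_e2 = (x1 + x2 + x3) ^+ 2 - (x1 ^+ 2 + x2 ^+ 2 + x3 ^+ 2)
              - (d1 + d2 + d3) ^+ 2 + (d1 ^+ 2 + d2 ^+ 2 + d3 ^+ 2).
Proof. by rewrite /re_e2; ring. Qed.

Hypothesis unit1 : x1 ^+ 2 + d1 ^+ 2 = 1.
Hypothesis unit2 : x2 ^+ 2 + d2 ^+ 2 = 1.
Hypothesis unit3 : x3 ^+ 2 + d3 ^+ 2 = 1.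

(* The identity e3 * conj(e2) = e1 for points of the unit circle, split into
   real and imaginary parts. *)
Lemma e3_conj_e2 :
  re_e3 * re_e2 + im_e3 * im_e2 = x1 + x2 + x3 /\
  im_e3 * re_e2 - re_e3 * im_e2 = d1 + d2 + d3.
Proof.
have re_id : re_e3 * re_e2 + im_e3 * im_e2 - (x1 + x2 + x3) =
    x3 * ((x1 ^+ 2 + d1 ^+ 2) * (x2 ^+ 2 + d2 ^+ 2) - 1)
  + x1 * ((x2 ^+ 2 + d2 ^+ 2) * (x3 ^+ 2 + d3 ^+ 2) - 1)
  + x2 * ((x1 ^+ 2 + d1 ^+ 2) * (x3 ^+ 2 + d3 ^+ 2) - 1).
  by rewrite /re_e3 /re_e2 /im_e3 /im_e2; ring.
have im_id : im_e3 * re_e2 - re_e3 * im_e2 - (d1 + d2 + d3) =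
    d3 * ((x1 ^+ 2 + d1 ^+ 2) * (x2 ^+ 2 + d2 ^+ 2) - 1)
  + d1 * ((x2 ^+ 2 + d2 ^+ 2) * (x3 ^+ 2 + d3 ^+ 2) - 1)
  + d2 * ((x1 ^+ 2 + d1 ^+ 2) * (x3 ^+ 2 + d3 ^+ 2) - 1).
  by rewrite /re_e3 /re_e2 /im_e3 /im_e2; ring.
rewrite unit1 unit2 unit3 mulr1 subrr !mulr0 !addr0 in re_id im_id.
by split; apply/eqP; rewrite -subr_eq0 ?re_id ?im_id.
Qed.

(* If z1 z2 z3 = -1 then z3 = -conj(z1 z2); in particular
   x3 = -(x1 x2 - d1 d2). *)
Lemma x3_of_e3_neg1 : re_e3 = -1 -> im_e3 = 0 -> x3 = - (x1 * x2 - d1 * d2).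
Proof.
move=> re3 im3; set p := x1 * x2 - d1 * d2; set q := x1 * d2 + d1 * x2.
have norm_pq : p ^+ 2 + q ^+ 2 = 1.
  have -> : p ^+ 2 + q ^+ 2 = (x1 ^+ 2 + d1 ^+ 2) * (x2 ^+ 2 + d2 ^+ 2).
    by rewrite /p /q; ring.
  by rewrite unit1 unit2 mulr1.
have -> : x3 = p * re_e3 + q * im_e3.
  by rewrite -[LHS]mul1r -norm_pq /p /q /re_e3 /im_e3; ring.
by rewrite re3 im3 mulr0 addr0 mulrN1.
Qed.

End UnitCircleTriples.

Arguments re_e2 {R}. Arguments im_e2 {R}.
Arguments re_e3 {R}. Arguments im_e3 {R}.
Arguments re_e2_power_sums {R}.
Arguments e3_conj_e2 {R x1 x2 x3 d1 d2 d3}.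
Arguments x3_of_e3_neg1 {R x1 x2 x3 d1 d2 d3}.

(* Cancelling a nonzero "conjugate": if (u + i v)(a - i b) = -(a - i b) with
   a^2 + b^2 <> 0, then u + i v = -1. *)
Lemma mul_conj_eq_neg {R : idomainType} {u v a b : R} :
  a ^+ 2 + b ^+ 2 != 0 -> u * a + v * b = - a -> v * a - u * b = b ->
  u = -1 /\ v = 0.
Proof.
move=> nz re im.
have hu : (u + 1) * (a ^+ 2 + b ^+ 2) = 0.
  have -> : (u + 1) * (a ^+ 2 + b ^+ 2) =
    a * (u * a + v * b + a) - b * (v * a - u * b - b) by ring.
  by rewrite re im addNr subrr !mulr0 subr0.
have hv : v * (a ^+ 2 + b ^+ 2) = 0.
  have -> : v * (a ^+ 2 + b ^+ 2) =
    b * (u * a + v * b + a) + a * (v * a - u * b - b) by ring.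
  by rewrite re im addNr subrr !mulr0 addr0.
move/eqP: hu; rewrite mulf_eq0 (negPf nz) orbF addr_eq0 => /eqP ->.
by move/eqP: hv; rewrite mulf_eq0 (negPf nz) orbF => /eqP ->.
Qed.

(* The "conjugate" (1 - c) - i c of e2 never vanishes over an ordered field. *)
Lemma sum_sq_one_sub_gt0 {R : realDomainType} (c : R) : 0 < (1 - c) ^+ 2 + c ^+ 2.
Proof. nra. Qed.

Lemma no_positive_x3_of_e3_neg1 {R : realFieldType} (x1 x2 x3 d1 d2 : R) :
  0 < x1 -> 0 < x2 -> 0 < x3 ->
  x1 ^+ 2 + x2 ^+ 2 + x3 ^+ 2 = 1 ->
  x1 ^+ 2 + d1 ^+ 2 = 1 -> x2 ^+ 2 + d2 ^+ 2 = 1 ->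
  x3 = - (x1 * x2 - d1 * d2) -> False.
Proof.
move=> x1_gt0 x2_gt0 x3_gt0 sum_sq unit1 unit2 def_x3.
have key : 2 * (x1 * x2) * (x1 * x2 - d1 * d2) = 0.
  have -> : 2 * (x1 * x2) * (x1 * x2 - d1 * d2) =
    (x1 * x2 - d1 * d2) ^+ 2 - (1 - x1 ^+ 2 - x2 ^+ 2)
    - (d1 ^+ 2 * d2 ^+ 2 - (1 - x1 ^+ 2) * (1 - x2 ^+ 2)) by ring.
  have -> : (x1 * x2 - d1 * d2) ^+ 2 = 1 - x1 ^+ 2 - x2 ^+ 2.
    by rewrite -sqrrN -def_x3; lra.
  have -> : d1 ^+ 2 = 1 - x1 ^+ 2 by lra.
  have -> : d2 ^+ 2 = 1 - x2 ^+ 2 by lra.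
  by rewrite !subrr.
have nz : 2 * (x1 * x2) != 0 by rewrite mulf_neq0 // gt_eqF // mulr_gt0.
move/eqP: key; rewrite mulf_eq0 (negPf nz) /= subr_eq0 => /eqP p0.
by move: x3_gt0; rewrite def_x3 p0 subrr oppr0 ltxx.
Qed.

Theorem theorem4p1 :
  ~ (exists (x1 x2 x3 d1 d2 d3 c : rat),
       unit_perfect_cuboid x1 x2 x3 d1 d2 d3 /\
       e11 x1 x2 x3 d1 d2 d3 = c /\
       e01 d1 d2 d3 = c /\
       e10 x1 x2 x3 = c - 1).
Proof.
move=> [x1 [x2 [x3 [d1 [d2 [d3 [c [[[x1_gt0 [x2_gt0 [x3_gt0 _]]]
  [sum_sq diag1 diag2 diag3]] [E11 [E01 E10]]]]]]]]]].
rewrite /e11 /e01 /e10 in E11 E01 E10.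
have unit1 : x1 ^+ 2 + d1 ^+ 2 = 1 by lra.
have unit2 : x2 ^+ 2 + d2 ^+ 2 = 1 by lra.
have unit3 : x3 ^+ 2 + d3 ^+ 2 = 1 by lra.
have im2 : im_e2 x1 x2 x3 d1 d2 d3 = c by [].
have sum_diag_sq : d1 ^+ 2 + d2 ^+ 2 + d3 ^+ 2 = 2 by lra.
have re2 : re_e2 x1 x2 x3 d1 d2 d3 = 1 - c.
  have := re_e2_power_sums x1 x2 x3 d1 d2 d3.
  rewrite E10 E01 sum_sq sum_diag_sq; lra.
have [re_id im_id] := e3_conj_e2 unit1 unit2 unit3.
rewrite re2 im2 E10 in re_id; rewrite re2 im2 E01 in im_id.
have [re3 im3] := mul_conj_eq_neg (lt0r_neq0 (sum_sq_one_sub_gt0 c))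
  (etrans re_id (esym (opprB 1 c))) im_id.
exact: no_positive_x3_of_e3_neg1 x1_gt0 x2_gt0 x3_gt0 sum_sq unit1 unit2
  (x3_of_e3_neg1 unit1 unit2 re3 im3).
Qed.
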